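(* Let $d\ge1$, $p\ge1$, $\sigma>0$, $\alpha>0$, let $F$, $U$, $\Phi$ be as in the context (satisfying the standing assumption there), and let $m_0\in\mathcal P_p(\mathbb R^d)$ be absolutely continuous with density $m_0(\cdot)$. Let $(m_t)_{t\ge0}$ be a solution in $C([0,+\infty);\mathcal W_p)$ of the entropic fictitious play $\frac{dm_t}{dt}=\alpha(\hat m_t-m_t)$ with initial value $m_0$, and let $m_t(\cdot)$ be its density given by $m_t(x)=\int_0^t\alpha e^{-\alpha(t-s)}\hat m_s(x)\,ds+e^{-\alpha t}m_0(x)$. Then there exist constants $c,C>0$, depending only on $F$ and $U$, such that for every $t\ge0$ and every $x\in\mathbb R^d$, \[ m_t(x)\ge(1-e^{-\alpha t})\,c\,e^{-U(x)},\qquad m_t(x)\le(1-e^{-\alpha t})\,C\,e^{-U(x)}+e^{-\alpha t}m_0(x). \]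
   Context: $\mathcal P(\mathbb R^d)$ denotes the Borel probability measures on $\mathbb R^d$, $\mathcal P_p(\mathbb R^d)$ those with finite $p$-th moment, $\mathcal W_p$ the $p$-Wasserstein distance (also the metric space $(\mathcal P_p(\mathbb R^d),\mathcal W_p)$). Standing assumption: (a) $F:\mathcal P(\mathbb R^d)\to\mathbb R$ is non-negative and there is a continuous function $\frac{\delta F}{\delta m}:\mathcal P(\mathbb R^d)\times\mathbb R^d\to\mathbb R$ such that for all $m_0,m_1$, $F(m_1)-F(m_0)=\int_0^1\int\frac{\delta F}{\delta m}(m_\lambda,x)\,(m_1-m_0)(dx)\,d\lambda$ with $m_\lambda=(1-\lambda)m_0+\lambda m_1$; and there are $L_F,M_F>0$ with $|\frac{\delta F}{\delta m}(m,x)-\frac{\delta F}{\delta m}(m',x')|\le L_F(\mathcal W_p(m,m')+|x-x'|)$ and $|\frac{\delta F}{\delta m}(m,x)|\le M_F$ for all $m,m',x,x'$. (b) $U:\mathbb R^d\to\mathbb R$ is measurable, $\int e^{-U}dx=1$, $\operatorname{ess\,inf}U>-\infty$, $\liminf_{|x|\to\infty}U(x)/|x|^p>0$. For $m\in\mathcal P_p(\mathbb R^d)$, $\hat m=\Phi(m)$ is the probability measure with density $\hat m(x)\propto\exp(-\frac{2}{\sigma^2}\frac{\delta F}{\delta m}(m,x)-U(x))$ (the unique minimizer of $\mu\mapsto\int\frac{\delta F}{\delta m}(m,x)\mu(dx)+\frac{\sigma^2}{2}H(\mu|g)$, $g$ having density $e^{-U}$). $\hat m_t:=\Phi(m_t)$.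 The equation is understood in the sense of distributions. *)

From HB Require Import structures.
From mathcomp Require Import all_boot all_order all_algebra.
From mathcomp Require Import all_classical all_reals all_analysis ess_sup_inf.
Set Implicit Arguments. Unset Strict Implicit. Unset Printing Implicit Defensive.
Import Order.TTheory GRing.Theory Num.Theory.
Import numFieldNormedType.Exports.
Local Open Scope classical_set_scope.
Local Open Scope ring_scope.

Section EntropicFP.
Variables (R : realType) (d : nat).

(* R^d with its Borel sigma-algebra (generated by the open sets of the
   product topology on row vectors, i.e. the usual topology of R^d). *)
Definition Rd := g_sigma_algebraType (@open 'rV[R]_d).
Definition vec (x : Rd) : 'rV[R]_d := x.

Definition enorm (v : 'rV[R]_d) : R := Num.sqrt (\sum_i v ord0 i ^+ 2).
Definition edist (x y : Rd) : R := enorm (vec x - vec y).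

(* lam is the Lebesgue measure on R^d: a measure on the Borel sets giving to
   every box ]a,b] its volume (this determines it uniquely). *)
Definition is_lebesgue_Rd (lam : {measure set Rd -> \bar R}) : Prop :=
  forall a b : 'rV[R]_d, (forall i, a ord0 i <= b ord0 i) ->
    lam [set x : Rd | forall i, a ord0 i < vec x ord0 i <= b ord0 i]
    = (\prod_i (b ord0 i - a ord0 i))%:E.

Definition PR := probability Rd R.

Definition in_Pp (p : R) (m : PR) : Prop :=
  (\int[m]_x ((enorm (vec x)) `^ p)%:E < +oo)%E.

Definition coupling (m m' : PR) (pi : probability (Rd * Rd)%type R) : Prop :=
  forall A : set Rd, measurable A ->
    pi (A `*` setT) = m A /\ pi (setT `*` A) = m' A.

Definition Wp (p : R) (m m' : PR) : \bar R :=
  ((ereal_inf [set (\int[pi]_z ((edist z.1 z.2) `^ p)%:E)%E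
                | pi in coupling m m']) `^ p^-1)%E.

Definition flat_derivative (F : PR -> R) (dF : PR -> Rd -> R) : Prop :=
  forall (m0 m1 : PR) (ml : R -> PR),
    (forall l, 0 <= l <= 1 -> forall A, measurable A ->
        ml l A = ((1 - l)%:E * m0 A + l%:E * m1 A)%E) ->
    F m1 - F m0 =
      \int[lebesgue_measure]_(l in `[0, 1])
         (\int[m1]_x dF (ml l) x - \int[m0]_x dF (ml l) x).

Definition dF_continuous (p : R) (dF : PR -> Rd -> R) : Prop :=
  forall (m : PR) (x : Rd), in_Pp p m -> forall eps : R, 0 < eps ->
    exists2 delta : R, 0 < delta &
      forall (m' : PR) (x' : Rd), in_Pp p m' ->
        (Wp p m m' + (edist x x')%:E < delta%:E)%E ->
        `|dF m x - dF m' x'| < eps.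

Definition dF_lipschitz (p : R) (dF : PR -> Rd -> R) (LF : R) : Prop :=
  forall (m m' : PR) (x x' : Rd), in_Pp p m -> in_Pp p m' ->
    (`|dF m x - dF m' x'|%:E <= LF%:E * (Wp p m m' + (edist x x')%:E))%E.

Definition dF_bounded (dF : PR -> Rd -> R) (MF : R) : Prop :=
  forall (m : PR) (x : Rd), `|dF m x| <= MF.

Definition standing_F (p : R) (F : PR -> R) (dF : PR -> Rd -> R) : Prop :=
  (forall m, 0 <= F m) /\ flat_derivative F dF /\ dF_continuous p dF /\
  (exists2 LF : R, 0 < LF & dF_lipschitz p dF LF) /\
  (exists2 MF : R, 0 < MF & dF_bounded dF MF).

Definition standing_U (lam : {measure set Rd -> \bar R}) (p : R) (U : Rd -> R)
  : Prop :=
  measurable_fun setT U /\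
  (\int[lam]_x (expR (- U x))%:E = 1)%E /\
  (ess_inf lam (EFin \o U) > -oo)%E /\
  (exists2 c : R, 0 < c & exists r : R, forall x : Rd,
      r <= enorm (vec x) -> c < U x / (enorm (vec x)) `^ p).

Definition Phi_exponent (sigma : R) (dF : PR -> Rd -> R) (U : Rd -> R)
  (m : PR) (x : Rd) : R :=
  expR (- (2 / sigma ^+ 2) * dF m x - U x).

Definition Phi_density (lam : {measure set Rd -> \bar R}) (sigma : R)
  (dF : PR -> Rd -> R) (U : Rd -> R) (m : PR) (x : Rd) : R :=
  Phi_exponent sigma dF U m x / \int[lam]_y Phi_exponent sigma dF U m y.

Definition Wp_continuous_curve (p : R) (m : R -> PR) : Prop :=
  (forall t, 0 <= t -> in_Pp p (m t)) /\
  forall t, 0 <= t -> forall eps : R, 0 < eps ->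
    exists2 delta : R, 0 < delta &
      forall s, 0 <= s -> `|s - t| < delta -> (Wp p (m s) (m t) < eps%:E)%E.

(* dm_t/dt = alpha (hat m_t - m_t) in the sense of distributions, written in
   its (equivalent) time-integrated weak form against continuous compactly
   supported test functions. *)
Definition EFP_solution (lam : {measure set Rd -> \bar R}) (sigma alpha : R)
  (dF : PR -> Rd -> R) (U : Rd -> R) (m : R -> PR) : Prop :=
  forall phi : 'rV[R]_d -> R, continuous phi ->
    (exists r : R, forall v, r < enorm v -> phi v = 0) ->
    forall t, 0 <= t ->
      \int[m t]_x phi (vec x) =
        \int[m 0]_x phi (vec x) +
        \int[lebesgue_measure]_(s in `[0, t])
           (alpha * (\int[lam]_x (phi (vec x) * Phi_density lam sigma dF U (m s) x)
                     - \int[m s]_x phi (vec x))).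

Definition is_density (lam : {measure set Rd -> \bar R}) (mu : PR) (f : Rd -> R)
  : Prop :=
  (forall x, 0 <= f x) /\ measurable_fun setT f /\
  forall A : set Rd, measurable A -> mu A = (\int[lam]_(x in A) (f x)%:E)%E.

End EntropicFP.

From HB Require Import structures.
From mathcomp Require Import all_boot all_order all_algebra.
From mathcomp Require Import all_classical all_reals all_analysis.
From mathcomp Require Import ring lra measurable_realfun.
Set Implicit Arguments.
Unset Strict Implicit.
Unset Printing Implicit Defensive.

Import Order.TTheory GRing.Theory Num.Theory.
Import numFieldNormedType.Exports.
Local Open Scope classical_set_scope.
Local Open Scope ring_scope.

(** Since |dF/dm| <= M, the Gibbs exponent of Phi(m) lies between
    e^(-K) e^(-U) and e^K e^(-U) with K = 2M/sigma^2, uniformly in m; as e^(-U)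
    is a probability density, the normalising constant lies in [e^(-K), e^K],
    so the density of Phi(m) is pinched between e^(-2K) e^(-U) and
    e^(2K) e^(-U).  In the Duhamel formula for m_t, the densities of the
    Phi(m_s) are averaged against the kernel alpha e^(-alpha (t - s)) on
    [0, t], of total mass 1 - e^(-alpha t), which transports the pinching. *)

Lemma fine_between (R : realDomainType) (x : \bar R) (lo hi : R) :
  (lo%:E <= x)%E -> (x <= hi%:E)%E -> lo <= fine x <= hi.
Proof. by case: x => [r| |] //=; rewrite !lee_fin => -> ->. Qed.

(* No measurability is needed: the integral of a nonnegative function is a
   supremum over the simple functions below it.  This matters because
   s |-> Phi(m_s)(x) is not known to be measurable. *)
Lemma ge0_le_integral_nonmeas (R : realType) dT (T : measurableType dT)
    (mu : {measure set T -> \bar R}) (D : set T) (f g : T -> \bar R) :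
  (forall x, D x -> (0 <= f x)%E) -> (forall x, D x -> (f x <= g x)%E) ->
  (\int[mu]_(x in D) f x <= \int[mu]_(x in D) g x)%E.
Proof.
move=> f0 fg.
have g0 x : D x -> (0 <= g x)%E by move=> Dx; exact: le_trans (f0 x Dx) (fg x Dx).
rewrite (ge0_integralE _ f0) (ge0_integralE _ g0).
apply: ereal_sup_le => _ [h hf <-]; exists h => //= x.
apply: le_trans (hf x) _.
by rewrite /patch; case: ifP => // /set_mem /fg.
Qed.

Section exponential_kernel.
Variable R : realType.
Implicit Types a t k lo hi s : R.

Lemma is_derive_exp_kernel a t k s :
  is_derive s 1 (fun s => k * expR (- a * (t - s)))
    (k * a * expR (- a * (t - s))).
Proof. by apply: is_derive_eq; rewrite /GRing.scale /=; ring. Qed.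

Lemma continuous_exp_kernel a t k :
  continuous (fun s : R => k * expR (- a * (t - s))).
Proof.
move=> s; apply/differentiable_continuous/derivable1_diffP.
by case: (@is_derive_exp_kernel a t k s).
Qed.

Lemma integral_exp_kernel a t k : 0 < t ->
  (\int[lebesgue_measure]_(s in `[0%R, t]) (k * a * expR (- a * (t - s)))%:E
   = (k * (1 - expR (- a * t)))%:E)%E.
Proof.
move=> t0.
rewrite (@continuous_FTC2 R _ (fun s => k * expR (- a * (t - s))) 0 t t0).
- by rewrite subrr mulr0 expR0 subr0 -EFinB; congr EFin; ring.
- apply: continuous_subspaceT => s.
  exact: continuous_exp_kernel.
- split.
  + by move=> s _; case: (@is_derive_exp_kernel a t k s).
  + exact: cvg_at_right_filter (@continuous_exp_kernel a t k 0).
  + exact: cvg_at_left_filter (@continuous_exp_kernel a t k t).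
- move=> s _; rewrite derive1E.
  exact: (@derive_val _ _ _ _ _ _ _ (@is_derive_exp_kernel a t k s)).
Qed.

Lemma Rintegral_exp_kernel_bounds a t lo hi (f : R -> R) :
  0 <= t -> 0 < a -> 0 <= lo ->
  (forall s, 0 <= s <= t -> lo <= f s <= hi) ->
  (1 - expR (- a * t)) * lo <=
    \int[lebesgue_measure]_(s in `[0, t]) (a * expR (- a * (t - s)) * f s)
  <= (1 - expR (- a * t)) * hi.
Proof.
move=> + a0 lo0 f_bnd; rewrite le_eqVlt => /orP[/eqP<-|t_gt0].
  by rewrite set_itv1 /Rintegral integral_set1 /= mulr0 expR0 subrr !mul0r lexx.
have kernel_ge0 s : 0 <= a * expR (- a * (t - s)).
  by rewrite mulr_ge0 ?expR_ge0 ?ltW.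
have f_bnd_itv s : `[0, t]%classic s -> lo <= f s <= hi.
  by rewrite /= in_itv /=; exact: f_bnd.
apply: fine_between; rewrite mulrC -integral_exp_kernel //;
  apply: ge0_le_integral_nonmeas => s /f_bnd_itv/andP[flo fhi];
  by rewrite lee_fin; have := kernel_ge0 s; nra.
Qed.

End exponential_kernel.

Lemma ler_ratio_bounds (R : realFieldType) (a b u e z : R) :
  0 < a -> 0 <= u -> a * u <= e <= b * u -> a <= z <= b ->
  a / b * u <= e / z <= b / a * u.
Proof.
move=> a0 u0 /andP[ae eb] /andP[az zb].
have b0 : 0 < b by exact: lt_le_trans a0 (le_trans az zb).
have z0 : 0 < z by exact: lt_le_trans a0 az.
have abK : a / b * b = a by rewrite divfK // gt_eqF.
have baK : b / a * a = b by rewrite divfK // gt_eqF.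
have ab_u0 : 0 <= a / b * u by rewrite mulr_ge0 // divr_ge0 // ltW.
have ba_u0 : 0 <= b / a * u by rewrite mulr_ge0 // divr_ge0 // ltW.
rewrite ler_pdivlMr // ler_pdivrMr //; apply/andP; split; nra.
Qed.

Lemma Rintegral_between_density (R : realType) dT (T : measurableType dT)
    (mu : {measure set T -> \bar R}) (g f : T -> R) (a b : R) :
  measurable_fun setT g -> (forall x, 0 <= g x) ->
  (\int[mu]_x (g x)%:E = 1)%E -> 0 <= a <= b ->
  (forall x, a * g x <= f x <= b * g x) ->
  a <= \int[mu]_x f x <= b.
Proof.
move=> mg g0 int_g /andP[a0 ab] f_bnd.
have int_Zg c : 0 <= c -> (\int[mu]_x (c * g x)%:E = c%:E)%E.
  move=> c0; under eq_integral do rewrite EFinM.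
  rewrite ge0_integralZl_EFin ?int_g ?mule1 //.
  - by move=> x _; rewrite lee_fin.
  - exact/measurable_EFinP.
apply: fine_between; rewrite -int_Zg ?(le_trans a0) //;
  apply: ge0_le_integral_nonmeas => x _; rewrite lee_fin;
  by move: (f_bnd x) (g0 x) => /andP[lo_f f_hi] g_ge0; nra.
Qed.

Section Gibbs_density_bounds.
Variables (R : realType) (d : nat) (lam : {measure set Rd R d -> \bar R}).
Variables (sigma MF : R) (dF : PR R d -> Rd R d -> R) (U : Rd R d -> R).
Hypotheses (MF_ge0 : 0 <= MF) (dF_bnd : dF_bounded dF MF).
Hypotheses (mU : measurable_fun setT U)
  (int_expNU : (\int[lam]_x (expR (- U x))%:E = 1)%E).

Let K := 2 / sigma ^+ 2 * MF.

Let K_ge0 : 0 <= K.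
Proof. by rewrite mulr_ge0 // divr_ge0 // sqr_ge0. Qed.

Lemma Phi_exponent_bounds m x :
  expR (- K) * expR (- U x) <= Phi_exponent sigma dF U m x
  <= expR K * expR (- U x).
Proof.
rewrite /Phi_exponent -!expRD !ler_expR mulNr.
have /andP[dF_geN dF_le] : - MF <= dF m x <= MF by rewrite -ler_norml.
have c_ge0 : 0 <= 2 / sigma ^+ 2 by rewrite divr_ge0 // sqr_ge0.
have : 2 / sigma ^+ 2 * dF m x <= K by exact: ler_wpM2l.
have : - K <= 2 / sigma ^+ 2 * dF m x by rewrite -mulrN; exact: ler_wpM2l.
lra.
Qed.

Lemma Phi_normalizer_bounds m :
  expR (- K) <= \int[lam]_y Phi_exponent sigma dF U m y <= expR K.
Proof.
apply: (Rintegral_between_density (g := fun x => expR (- U x))) => //.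
- exact/measurableT_comp/measurable_funN.
- by rewrite expR_ge0 ler_expR; have := K_ge0; lra.
- exact: Phi_exponent_bounds.
Qed.

Lemma Phi_density_bounds m x :
  expR (- K) / expR K * expR (- U x) <= Phi_density lam sigma dF U m x
  <= expR K / expR (- K) * expR (- U x).
Proof.
exact: ler_ratio_bounds (expR_gt0 _) (expR_ge0 _)
  (Phi_exponent_bounds m x) (Phi_normalizer_bounds m).
Qed.

End Gibbs_density_bounds.

Theorem corollary18 (R : realType) (d : nat) (p sigma : R)
  (lam : {measure set (Rd R d) -> \bar R})
  (F : PR R d -> R) (dF : PR R d -> Rd R d -> R) (U : Rd R d -> R) :
  (1 <= d)%N -> 1 <= p -> 0 < sigma ->
  is_lebesgue_Rd lam ->
  standing_F p F dF ->
  standing_U lam p U ->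
  exists c C : R, 0 < c /\ 0 < C /\
    forall (alpha : R) (m : R -> PR R d) (m0d : Rd R d -> R)
           (mdens : R -> Rd R d -> R),
      0 < alpha ->
      is_density lam (m 0) m0d ->
      Wp_continuous_curve p m ->
      EFP_solution lam sigma alpha dF U m ->
      (forall t, 0 <= t -> forall x,
         mdens t x =
           \int[lebesgue_measure]_(s in `[0, t])
              (alpha * expR (- alpha * (t - s)) * Phi_density lam sigma dF U (m s) x)
           + expR (- alpha * t) * m0d x) ->
      (forall t, 0 <= t -> is_density lam (m t) (mdens t)) ->
      forall t, 0 <= t -> forall x : Rd R d,
        (1 - expR (- alpha * t)) * c * expR (- U x) <= mdens t x /\
        mdens t x <= (1 - expR (- alpha * t)) * C * expR (- U x)
                     + expR (- alpha * t) * m0d x.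
Proof.
move=> _ _ _ _ [_ [_ [_ [_ [MF MF_gt0 dF_bnd]]]]] [mU [int_expNU _]].
have Phi_bnd := Phi_density_bounds sigma (ltW MF_gt0) dF_bnd mU int_expNU.
set K := 2 / sigma ^+ 2 * MF in Phi_bnd.
exists (expR (- K) / expR K), (expR K / expR (- K)).
split; first by rewrite divr_gt0 ?expR_gt0.
split; first by rewrite divr_gt0 ?expR_gt0.
move=> alpha m m0d mdens alpha_gt0 [m0d_ge0 _] _ _ duhamel _ t t_ge0 x.
have lo_ge0 : 0 <= expR (- K) / expR K * expR (- U x).
  by rewrite !mulr_ge0 ?invr_ge0 ?expR_ge0.
have := Rintegral_exp_kernel_bounds t_ge0 alpha_gt0 lo_ge0
  (fun s _ => Phi_bnd (m s) x).
have : 0 <= expR (- alpha * t) * m0d x by rewrite mulr_ge0 ?expR_ge0.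
by rewrite duhamel // !mulrA; lra.
Qed.
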